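(* Let $A\subset\mathbb R$ be an open interval of length strictly larger than $2$, let $\psi:A\to\mathbb C$ be a regular $\mathbb C$-supershift on $A$, and let $a_0\in A$. Then the function $a\in A\mapsto\int_{a_0}^a\psi(\alpha)\,d\alpha$ is a regular $\mathbb C$-supershift on $A$.
   Context: For an open interval $A\subset\mathbb R$ of length $R>2$ (possibly infinite), set $\mathbb A=\{(a,a')\in\mathbb R\times A:\ a'+[-1,1]\subset A,\ a+a'\in A\}$. For a sequence $\boldsymbol\epsilon=(\epsilon_N)_{N\ge1}$ with $\epsilon_N\in[0,1)$ and $\epsilon_N\to0$, put $h^{\boldsymbol\epsilon}_{N,\nu}=1-2\,\frac{\nu+\epsilon_N(N-\nu)}{N}$ for $0\le\nu\le N$. For a continuous $\psi:A\to\mathbb C$ and $(a,a')\in\mathbb A$ set $$S_N^{\boldsymbol\epsilon}[\psi](a,a')=\sum_{\nu=0}^N\binom N\nu\Big(\frac{1+a}2\Big)^{N-\nu}\Big(\frac{1-a}2\Big)^{\nu}\psi\big(a'+h^{\boldsymbol\epsilon}_{N,\nu}\big).$$ A continuous $\psi:A\to\mathbb C$ is called a regular $\mathbb C$-supershift on $A$ if (1) for every such sequence $\boldsymbol\epsilon$, $S_N^{\boldsymbol\epsilon}[\psi](a,a')\to\psi(a+a')$ as $N\to\infty$ uniformly on compact subsets of $\mathbb A$; and (2) for every family $\{\boldsymbol\epsilon_{\iota'}=(\epsilon_{\iota',N})_{N\ge1}:\iota'\in I'\}$ of such sequences with $\sup_{\iota'\in I'}\epsilon_{\iota',N}\to0$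 as $N\to\infty$, the convergence in (1) is uniform with respect to $\iota'\in I'$ on each compact subset of $\mathbb A$. *)

From Stdlib Require Import Reals List.
From Coquelicot Require Import Coquelicot.
Open Scope R_scope.

Definition inI (lo hi : Rbar) (x : R) : Prop := Rbar_lt lo x /\ Rbar_lt x hi.

Definition long_interval (lo hi : Rbar) : Prop := Rbar_lt (Rbar_plus lo 2) hi.

Definition bbA (lo hi : Rbar) (p : R * R) : Prop :=
  (forall t, -1 <= t <= 1 -> inI lo hi (snd p + t)) /\ inI lo hi (fst p + snd p).

Definition compact2 (K : R * R -> Prop) : Prop :=
  forall (I : Type) (U : I -> (R * R) -> Prop),
    (forall i, @open (prod_UniformSpace R_UniformSpace R_UniformSpace) (U i)) ->
    (forall x, K x -> exists i, U i x) ->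
    exists l : list I, forall x, K x -> exists i, In i l /\ U i x.

Definition adm_seq (eps : nat -> R) : Prop :=
  (forall N : nat, (1 <= N)%nat -> 0 <= eps N < 1) /\ is_lim_seq eps 0.

Definition hN (eps : nat -> R) (N nu : nat) : R :=
  1 - 2 * ((INR nu + eps N * (INR N - INR nu)) / INR N).

Definition SN (eps : nat -> R) (psi : R -> C) (N : nat) (p : R * R) : C :=
  sum_n (fun nu : nat =>
     Cmult (RtoC (Binomial.C N nu * ((1 + fst p) / 2) ^ (N - nu) * ((1 - fst p) / 2) ^ nu))
       (psi (snd p + hN eps N nu))) N.

Definition regular_supershift (lo hi : Rbar) (psi : R -> C) : Prop :=
  (forall x, inI lo hi x -> continuous psi x) /\
  (* (1) *)
  (forall eps, adm_seq eps ->
     forall K, (forall p, K p -> bbA lo hi p) -> compact2 K ->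
     forall e, 0 < e -> exists N0 : nat, forall N, (N0 <= N)%nat ->
       forall p, K p -> Cmod (Cminus (SN eps psi N p) (psi (fst p + snd p))) < e) /\
  (* (2) *)
  (forall (I' : Type) (eps : I' -> nat -> R),
     (forall i, adm_seq (eps i)) ->
     (forall eta, 0 < eta -> exists M : nat, forall N, (M <= N)%nat ->
        forall i, eps i N <= eta) ->
     forall K, (forall p, K p -> bbA lo hi p) -> compact2 K ->
     forall e, 0 < e -> exists N0 : nat, forall N, (N0 <= N)%nat ->
       forall i p, K p -> Cmod (Cminus (SN (eps i) psi N p) (psi (fst p + snd p))) < e).

From Stdlib Require Import Reals Lra Lia List Classical ClassicalEpsilon.
From Coquelicot Require Import Coquelicot.

(* Let Ψ(a) = ∫_{a0}^{a} ψ.  For fixed a', the sum S_N^ε[Ψ](b, a') is a Bernstein polynomial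
   B_N g(b) in b with coefficients g_ν = Ψ(a' + h_{N,ν}), so the defect
   D(b) = B_N g(b) - Ψ(b + a') vanishes at b = -1 (only g_N survives there, and h_{N,N} = -1),
   and D'(b) = (N/2) B_{N-1}(Δg)(b) - ψ(b + a') with Δg_μ = g_μ - g_{μ+1}.  Each Δg_μ is the
   integral of ψ over a step of length c = 2(1 - ε_N)/N starting at a' + h_{N,μ+1}, and
   h_{N,μ+1} is the node h_{N-1,μ} of the shifted sequence δ_{N-1} = ε_N + (1 - ε_N)/N.  Hence
   (N/2) B_{N-1}(Δg)(b) is (1 - ε_N) times the mean of S_{N-1}^δ[ψ](b, a' + s) over s ∈ [0, c],
   so |D'| is bounded by the supershift error of ψ for δ, the oscillation of ψ at scale c, and
   ε_N sup |ψ|.  Integrating D' from -1 to a bounds D(a).  The shifted sequences δ still tend to 0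
   uniformly, so property (2) of ψ, used on a compact neighbourhood of the points involved, yields
   property (2) of Ψ; property (1) is the case of a one-element family. *)

Ltac C_field :=
  repeat match goal with z : C |- _ => destruct z end;
  apply injective_projections; simpl;
  unfold Cminus, Cplus, Copp, Cmult, RtoC, scal, plus, minus, opp, mult, zero; simpl;
  unfold prod_scal, prod_plus, prod_opp; simpl;
  unfold scal, plus, minus, opp, mult, zero; simpl;
  field.

Lemma Cmult_RtoC_scal (r : R) (z : C) : Cmult (RtoC r) z = scal r z.
Proof. C_field. Qed.

Lemma is_derive_scal_fct (f : R -> R) (h : R -> C) (x df : R) (dh : C) :
  is_derive f x df -> is_derive h x dh ->
  is_derive (fun t => scal (f t) (h t)) x (plus (scal df (h x)) (scal (f x) dh)).
Proof.
  intros Hf Hh. eapply filterdiff_ext_lin.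
  - exact (filterdiff_scal_fct x f h _ _ Rmult_comm Hf Hh).
  - intros y. simpl. generalize (h x) dh. intros. C_field.
Qed.

Lemma sum_n_pascal {G : AbelianMonoid} (x u v : nat -> G) (N : nat) :
  x O = u O -> (forall k, (k < N)%nat -> x (S k) = plus (u (S k)) (v k)) -> x (S N) = v N ->
  sum_n x (S N) = plus (sum_n u N) (sum_n v N).
Proof.
  intros H0 HS HN.
  enough (Hm : forall M, (M <= N)%nat -> plus (sum_n x M) (v M) = plus (sum_n u M) (sum_n v M))
    by (rewrite sum_Sn, HN; apply Hm; lia).
  induction M as [|M IH]; intros HM.
  - rewrite !sum_O, H0. reflexivity.
  - rewrite !sum_Sn, HS by lia.
    rewrite (plus_comm (u (S M)) (v M)), (plus_assoc (sum_n x M) (v M)), IH by lia.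
    rewrite <- !plus_assoc. f_equal. rewrite !plus_assoc. f_equal. apply plus_comm.
Qed.

Lemma is_derive_eq {V : NormedModule R_AbsRing} (f : R -> V) x d1 d2 :
  is_derive f x d1 -> d1 = d2 -> is_derive f x d2.
Proof. intros H <-; exact H. Qed.

Definition fwd_diff (g : nat -> C) (k : nat) : C := minus (g k) (g (S k)).

(* de Casteljau form of the binomial sum in [SN], see [sum_n_binom_weight]. *)
Fixpoint bernstein (N : nat) (g : nat -> C) (b : R) : C :=
  match N with
  | O => g O
  | S M => plus (scal ((1 + b) / 2) (bernstein M g b))
                (scal ((1 - b) / 2) (bernstein M (fun k => g (S k)) b))
  end.

Lemma bernstein_minus N : forall g h b,
  bernstein N (fun k => minus (g k) (h k)) b = minus (bernstein N g b) (bernstein N h b).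
Proof.
  induction N as [|N IH]; intros g h b; [reflexivity|]. simpl.
  rewrite (IH g h), (IH (fun k => g (S k)) (fun k => h (S k))).
  generalize (bernstein N g b) (bernstein N h b)
    (bernstein N (fun k => g (S k)) b) (bernstein N (fun k => h (S k)) b).
  intros. C_field.
Qed.

Lemma bernstein_m1 N : forall g, bernstein N g (-1) = g N.
Proof.
  induction N as [|N IH]; intros g; [reflexivity|]. simpl.
  rewrite (IH g), (IH (fun k => g (S k))). generalize (g N) (g (S N)). intros. C_field.
Qed.

Lemma continuous_bernstein N : forall g b,
  @continuous R_UniformSpace C_R_NormedModule (bernstein N g) b.
Proof.
  induction N as [|N IH]; intros g b; simpl.
  - apply continuous_const.
  - apply @continuous_plus; apply @continuous_scal; try apply IH;
      apply (ex_derive_continuous (V := R_NormedModule)); auto_derive; auto.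
Qed.

Lemma is_RInt_bernstein N : forall (G : nat -> R -> C) (I : nat -> C) u v b,
  (forall k, (k <= N)%nat -> is_RInt (G k) u v (I k)) ->
  is_RInt (fun s => bernstein N (fun k => G k s) b) u v (bernstein N I b).
Proof.
  induction N as [|N IH]; intros G I u v b H; simpl.
  - apply H. lia.
  - apply @is_RInt_plus; apply @is_RInt_scal.
    + apply IH. intros; apply H; lia.
    + apply (IH (fun k => G (S k)) (fun k => I (S k))). intros; apply H; lia.
Qed.

Lemma is_derive_bernstein N : forall g b,
  is_derive (bernstein (S N) g) b (scal (INR (S N) / 2) (bernstein N (fwd_diff g) b)).
Proof.
  induction N as [|N IH]; intros g b.
  - eapply is_derive_eq.
    + apply @is_derive_plus; apply @is_derive_scal_l; auto_derive; auto.
    + simpl. unfold fwd_diff. generalize (g 0%nat) (g 1%nat). intros. C_field.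
  - change (bernstein (S (S N)) g) with (fun x =>
      plus (scal ((1 + x) / 2) (bernstein (S N) g x))
           (scal ((1 - x) / 2) (bernstein (S N) (fun k => g (S k)) x))).
    eapply is_derive_eq.
    + apply @is_derive_plus; apply is_derive_scal_fct; try apply IH; auto_derive; auto.
    + (* Split (N+2)/2 as 1/2 + (N+1)/2: differentiating the weights gives the first part,
         [IH] the second. *)
      set (B1 := bernstein (S N) (fwd_diff g) b).
      assert (E1 : B1 = minus (bernstein (S N) g b) (bernstein (S N) (fun k => g (S k)) b))
        by apply bernstein_minus.
      assert (E2 : B1 = plus (scal ((1 + b) / 2) (bernstein N (fwd_diff g) b))
                             (scal ((1 - b) / 2) (bernstein N (fwd_diff (fun k => g (S k))) b)))
        by reflexivity.
      transitivity (plus (scal (1 / 2) B1) (scal (INR (S N) / 2) B1)).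
      2: { rewrite (S_INR (S N)). clearbody B1. C_field. }
      rewrite E1 at 1. rewrite E2.
      generalize (bernstein (S N) g b) (bernstein (S N) (fun k => g (S k)) b)
        (bernstein N (fwd_diff g) b) (bernstein N (fwd_diff (fun k => g (S k))) b).
      intros. C_field.
Qed.

Definition binom_weight (N nu : nat) (b : R) : R :=
  Binomial.C N nu * ((1 + b) / 2) ^ (N - nu) * ((1 - b) / 2) ^ nu.

Lemma binom_weight_rec N b :
  binom_weight (S N) 0 b = (1 + b) / 2 * binom_weight N 0 b /\
  (forall k, (k < N)%nat -> binom_weight (S N) (S k) b =
     (1 + b) / 2 * binom_weight N (S k) b + (1 - b) / 2 * binom_weight N k b) /\
  binom_weight (S N) (S N) b = (1 - b) / 2 * binom_weight N N b.
Proof.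
  unfold binom_weight. split; [|split].
  - rewrite !C_n_0, !Nat.sub_0_r. simpl. ring.
  - intros k Hk. rewrite <- pascal by exact Hk.
    replace (S N - S k)%nat with (S (N - S k)) by lia.
    replace (N - k)%nat with (S (N - S k)) by lia. simpl. ring.
  - rewrite !C_n_n, !Nat.sub_diag. simpl. ring.
Qed.

Lemma sum_n_binom_weight N : forall g b,
  sum_n (fun nu => scal (binom_weight N nu b) (g nu)) N = bernstein N g b.
Proof.
  induction N as [|N IH]; intros g b.
  - rewrite sum_O. unfold binom_weight. simpl. rewrite C_n_0. generalize (g 0%nat). intros. C_field.
  - destruct (binom_weight_rec N b) as [W0 [WS WN]].
    rewrite (sum_n_pascal _
      (fun nu => scal ((1 + b) / 2) (scal (binom_weight N nu b) (g nu)))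
      (fun nu => scal ((1 - b) / 2) (scal (binom_weight N nu b) (g (S nu))))).
    + cbn [bernstein]. rewrite !(@sum_n_scal_l R_Ring C_R_ModuleSpace).
      rewrite (IH g), (IH (fun k => g (S k))). reflexivity.
    + rewrite W0. generalize (g 0%nat). intros. C_field.
    + intros k Hk. rewrite (WS k Hk). generalize (g (S k)). intros. C_field.
    + rewrite WN. generalize (g (S N)). intros. C_field.
Qed.

Lemma SN_bernstein eps (f : R -> C) N b a' :
  SN eps f N (b, a') = bernstein N (fun nu => f (a' + hN eps N nu)) b.
Proof.
  etransitivity; [apply sum_n_ext; intros nu; apply Cmult_RtoC_scal | apply sum_n_binom_weight].
Qed.

Definition hN_step (eps : nat -> R) (N : nat) : R := 2 * (1 - eps N) / INR N.

Definition eps_shift (eps : nat -> R) (M : nat) : R := eps (S M) + (1 - eps (S M)) / INR (S M).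

Lemma hN_bounds eps N nu :
  (1 <= N)%nat -> 0 <= eps N <= 1 -> (nu <= N)%nat -> -1 <= hN eps N nu <= 1.
Proof.
  intros HN He Hnu. unfold hN.
  assert (HN0 : 0 < INR N) by (apply lt_0_INR; lia).
  assert (Hnu0 : 0 <= INR nu <= INR N) by (split; [apply pos_INR | apply le_INR; lia]).
  set (q := (INR nu + eps N * (INR N - INR nu)) / INR N).
  assert (Hq : q * INR N = INR nu + eps N * (INR N - INR nu)) by (unfold q; field; lra).
  assert (0 <= q <= 1) by nra. lra.
Qed.

Lemma hN_step_nonneg eps N : eps N <= 1 -> 0 <= hN_step eps N.
Proof.
  intros He. unfold hN_step, Rdiv. apply Rmult_le_pos; [lra|].
  destruct N as [|N]; [simpl INR; rewrite Rinv_0; lra|].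
  apply Rlt_le, Rinv_0_lt_compat, lt_0_INR. lia.
Qed.

Lemma hN_last eps N : (1 <= N)%nat -> hN eps N N = -1.
Proof.
  intros HN. assert (0 < INR N) by (apply lt_0_INR; lia).
  unfold hN. rewrite Rminus_diag. field. lra.
Qed.

Lemma hN_succ eps N mu : (1 <= N)%nat -> hN eps N mu = hN eps N (S mu) + hN_step eps N.
Proof.
  intros HN. assert (0 < INR N) by (apply lt_0_INR; lia).
  unfold hN, hN_step. rewrite S_INR. field. lra.
Qed.

Lemma hN_eps_shift eps M mu : (1 <= M)%nat -> hN eps (S M) (S mu) = hN (eps_shift eps) M mu.
Proof.
  intros HM. assert (0 < INR M) by (apply lt_0_INR; lia).
  unfold hN, eps_shift. rewrite !S_INR. field. lra.
Qed.

Lemma eps_shift_bounds eps M :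
  0 <= eps (S M) <= 1 -> 0 <= eps_shift eps M <= eps (S M) + / INR (S M).
Proof.
  intros He. unfold eps_shift.
  assert (0 < INR (S M)) by (apply lt_0_INR; lia).
  assert (0 <= (1 - eps (S M)) / INR (S M) <= / INR (S M)).
  { unfold Rdiv. split; [apply Rmult_le_pos; [lra | apply Rlt_le, Rinv_0_lt_compat; lra]|].
    rewrite <- (Rmult_1_l (/ INR (S M))) at 2.
    apply Rmult_le_compat_r; [apply Rlt_le, Rinv_0_lt_compat|]; lra. }
  lra.
Qed.

Lemma eps_shift_lt_1 eps M : (1 <= M)%nat -> eps (S M) < 1 -> eps_shift eps M < 1.
Proof.
  intros HM He. unfold eps_shift. rewrite S_INR.
  assert (1 <= INR M) by (apply (le_INR 1); exact HM).
  assert ((1 - eps (S M)) / (INR M + 1) < 1 - eps (S M)).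
  { apply (Rmult_lt_reg_r (INR M + 1)); [lra|]. unfold Rdiv.
    rewrite Rmult_assoc, Rinv_l by lra. nra. }
  lra.
Qed.

Lemma INR_unbounded (r : R) : exists n : nat, r < INR n.
Proof. destruct (INR_archimed 1 r) as [n Hn]; [lra|]. exists n. lra. Qed.

Lemma eventually_inv_INR_le eta :
  0 < eta -> exists M, forall N, (M <= N)%nat -> / INR (S N) <= eta.
Proof.
  intros Heta. destruct (INR_archimed eta 1 Heta) as [M HM]. exists M. intros N HN.
  assert (INR M <= INR (S N)) by (apply le_INR; lia).
  assert (0 < INR (S N)) by (apply lt_0_INR; lia).
  apply (Rmult_le_reg_r (INR (S N))); [lra|]. rewrite Rinv_l by lra. nra.
Qed.

Definition unif_vanishing {I : Type} (eps : I -> nat -> R) : Prop :=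
  forall eta, 0 < eta -> exists M : nat, forall N, (M <= N)%nat -> forall i, eps i N <= eta.

Lemma unif_vanishing_adm_seq eps : adm_seq eps -> unif_vanishing (fun _ : unit => eps).
Proof.
  intros [_ Hlim] eta Heta. apply is_lim_seq_spec in Hlim.
  destruct (Hlim (mkposreal eta Heta)) as [M HM]. exists M. intros N HN _.
  specialize (HM N HN). simpl in HM. rewrite Rminus_0_r in HM.
  apply Rabs_def2 in HM. lra.
Qed.

Lemma unif_vanishing_eps_shift {I : Type} (eps : I -> nat -> R) :
  (forall i N, 0 <= eps i (S N) <= 1) ->
  unif_vanishing eps -> unif_vanishing (fun i => eps_shift (eps i)).
Proof.
  intros Hrange Hu eta Heta.
  destruct (Hu (eta / 2) ltac:(lra)) as [M1 HM1].
  destruct (eventually_inv_INR_le (eta / 2) ltac:(lra)) as [M2 HM2].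
  exists (max M1 M2). intros N HN i.
  destruct (eps_shift_bounds (eps i) N (Hrange i N)) as [_ Hle].
  specialize (HM1 (S N) ltac:(lia) i). specialize (HM2 N ltac:(lia)). lra.
Qed.

Lemma adm_seq_eps_shift eps : adm_seq eps -> adm_seq (eps_shift eps).
Proof.
  intros Hadm. pose proof (proj1 Hadm) as Hrange.
  assert (Hr : forall N, 0 <= eps (S N) <= 1)
    by (intros N; specialize (Hrange (S N) ltac:(lia)); lra).
  split.
  - intros N HN. split; [apply eps_shift_bounds, Hr|].
    apply eps_shift_lt_1; [exact HN | apply Hrange; lia].
  - apply is_lim_seq_spec. intros eta.
    destruct (unif_vanishing_eps_shift (fun _ : unit => eps) (fun _ => Hr)
      (unif_vanishing_adm_seq eps Hadm) (eta / 2)) as [M HM]; [destruct eta; simpl; lra|].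
    exists M. intros N HN. specialize (HM N HN tt).
    destruct (eps_shift_bounds eps N (Hr N)) as [H0 _].
    rewrite Rminus_0_r, Rabs_right by lra. destruct eta; simpl in *; lra.
Qed.

Lemma Cmod_scal_average (f : R -> C) (I z : C) (k c e : R) :
  0 <= c -> 0 <= k -> k * c <= 1 -> is_RInt f 0 c I ->
  (forall s, 0 <= s <= c -> Cmod (minus (f s) z) <= e) ->
  Cmod (minus (scal k I) z) <= e + (1 - k * c) * Cmod z.
Proof.
  intros Hc Hk Hkc HI Hf.
  assert (He : 0 <= e) by (eapply Rle_trans; [apply Cmod_ge_0 | apply (Hf 0); lra]).
  assert (HJ : is_RInt (fun s => minus (f s) z) 0 c (minus I (scal c z))).
  { rewrite <- (Rminus_0_r c) at 2. apply @is_RInt_minus; [exact HI | apply @is_RInt_const]. }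
  assert (HJe : Cmod (minus I (scal c z)) <= c * e).
  { replace (c * e) with ((c - 0) * e) by ring. rewrite Cmod_norm.
    apply (norm_RInt_le_const (fun s => minus (f s) z) 0 c _ _ Hc); [|exact HJ].
    intros s Hs. rewrite <- Cmod_norm. apply Hf, Hs. }
  replace (minus (scal k I) z) with (plus (scal k (minus I (scal c z))) (scal (k * c - 1) z))
    by (generalize I z; intros; C_field).
  rewrite Cmod_norm. eapply Rle_trans; [apply (@norm_triangle R_AbsRing C_R_NormedModule)|].
  eapply Rle_trans; [apply Rplus_le_compat; apply (@norm_scal R_AbsRing C_R_NormedModule)|].
  rewrite <- !Cmod_norm. change (@abs R_AbsRing) with Rabs. rewrite Rabs_right, Rabs_left1 by lra.
  assert (k * Cmod (minus I (scal c z)) <= k * c * e)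
    by (rewrite Rmult_assoc; apply Rmult_le_compat_l; lra).
  assert (0 <= k * c) by (apply Rmult_le_pos; lra).
  assert (k * c * e <= e) by nra.
  lra.
Qed.

Lemma inI_between lo hi x y z :
  inI lo hi x -> inI lo hi y -> Rmin x y <= z <= Rmax x y -> inI lo hi z.
Proof.
  intros [Hx1 Hx2] [Hy1 Hy2] [Hz1 Hz2]. split.
  - apply Rbar_lt_le_trans with (Rmin x y); [|exact Hz1].
    unfold Rmin; destruct Rle_dec; assumption.
  - apply Rbar_le_lt_trans with (Rmax x y); [exact Hz2|].
    unfold Rmax; destruct Rle_dec; assumption.
Qed.

Lemma inI_open lo hi : open (inI lo hi).
Proof. apply open_and; [apply open_Rbar_gt | apply open_Rbar_lt]. Qed.

Definition primitive (psi : R -> C) (a0 x : R) : C := @RInt C_R_CompleteNormedModule psi a0 x.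

Section Primitive.

Variables (lo hi : Rbar) (psi : R -> C) (a0 : R).
Hypothesis psi_cont : forall x, inI lo hi x -> @continuous R_UniformSpace C_R_NormedModule psi x.
Hypothesis a0_in : inI lo hi a0.

Lemma ex_RInt_inI x y : inI lo hi x -> inI lo hi y -> @ex_RInt C_R_CompleteNormedModule psi x y.
Proof.
  intros Hx Hy. apply ex_RInt_continuous. intros z Hz. apply psi_cont.
  exact (inI_between lo hi x y z Hx Hy Hz).
Qed.

Lemma primitive_minus x y : inI lo hi x -> inI lo hi y ->
  minus (primitive psi a0 y) (primitive psi a0 x) = @RInt C_R_CompleteNormedModule psi x y.
Proof.
  intros Hx Hy. unfold primitive.
  rewrite <- (@RInt_Chasles C_R_CompleteNormedModule psi a0 x y) by (apply ex_RInt_inI; assumption).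
  generalize (@RInt C_R_CompleteNormedModule psi a0 x) (@RInt C_R_CompleteNormedModule psi x y).
  intros. C_field.
Qed.

Lemma is_derive_primitive x : inI lo hi x -> is_derive (primitive psi a0) x (psi x).
Proof.
  intros Hx. apply (is_derive_RInt psi (primitive psi a0) a0 x); [|apply psi_cont, Hx].
  apply (filter_imp (inI lo hi)); [|apply inI_open; exact Hx].
  intros y Hy. apply (@RInt_correct C_R_CompleteNormedModule), ex_RInt_inI; assumption.
Qed.

Variables (M : nat) (eps : nat -> R) (a' : R).
Let N := S M.
Hypothesis M_pos : (1 <= M)%nat.
Hypothesis eps_range : 0 <= eps N < 1.
Hypothesis nodes_in : forall t, -1 <= t <= 1 -> inI lo hi (a' + t).

Let g := fun nu => primitive psi a0 (a' + hN eps N nu).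

Lemma node_inI nu : (nu <= N)%nat -> inI lo hi (a' + hN eps N nu).
Proof. intros Hnu. apply nodes_in, hN_bounds; unfold N in *; [lia | lra | exact Hnu]. Qed.

Lemma is_RInt_fwd_diff_nodes mu : (mu <= M)%nat ->
  is_RInt (fun s => psi (a' + s + hN (eps_shift eps) M mu)) 0 (hN_step eps N) (fwd_diff g mu).
Proof.
  intros Hmu. set (c := hN_step eps N). set (y := a' + hN eps N (S mu)).
  assert (Hyc : y + c = a' + hN eps N mu)
    by (unfold y, c; rewrite (hN_succ eps N mu) by (unfold N; lia); ring).
  assert (Hy : inI lo hi y) by (apply node_inI; unfold N; lia).
  assert (Hy' : inI lo hi (y + c)) by (rewrite Hyc; apply node_inI; unfold N; lia).
  assert (Hdiff : fwd_diff g mu = @RInt C_R_CompleteNormedModule psi y (y + c))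
    by (rewrite <- primitive_minus, Hyc by assumption; reflexivity).
  rewrite Hdiff.
  pose proof (@RInt_correct C_R_CompleteNormedModule psi y (y + c) (ex_RInt_inI _ _ Hy Hy')) as HI.
  assert (HI' : is_RInt psi (1 * 0 + y) (1 * c + y) (@RInt C_R_CompleteNormedModule psi y (y + c)))
    by (rewrite Rmult_0_r, Rplus_0_l, Rmult_1_l, Rplus_comm; exact HI).
  eapply is_RInt_ext; [| exact (is_RInt_comp_lin psi 1 y 0 c _ HI')].
  intros s _. rewrite <- hN_eps_shift by exact M_pos. fold N.
  replace (a' + s + hN eps N (S mu)) with (1 * s + y) by (unfold y; ring).
  apply (@scal_one R_Ring C_R_ModuleSpace).
Qed.

Lemma is_RInt_SN_eps_shift b :
  is_RInt (fun s => SN (eps_shift eps) psi M (b, a' + s)) 0 (hN_step eps N)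
    (bernstein M (fwd_diff g) b).
Proof.
  eapply is_RInt_ext; [intros s _; symmetry; apply SN_bernstein|].
  apply (is_RInt_bernstein M (fun k s => psi (a' + s + hN (eps_shift eps) M k))).
  exact is_RInt_fwd_diff_nodes.
Qed.

Let defect x := minus (SN eps (primitive psi a0) N (x, a')) (primitive psi a0 (x + a')).
Let defect' x := minus (scal (INR N / 2) (bernstein M (fwd_diff g) x)) (psi (x + a')).

Lemma is_derive_defect b : inI lo hi (b + a') -> is_derive defect b (defect' b).
Proof.
  intros Hb. apply @is_derive_minus.
  - eapply is_derive_ext; [intros x; symmetry; apply SN_bernstein|]. apply is_derive_bernstein.
  - eapply is_derive_eq.
    + apply (is_derive_comp (primitive psi a0) (fun x => x + a')).
      * apply is_derive_primitive, Hb.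
      * auto_derive; auto.
    + generalize (psi (b + a')). intros. C_field.
Qed.

Lemma continuous_defect' b :
  inI lo hi (b + a') -> @continuous R_UniformSpace C_R_NormedModule defect' b.
Proof.
  intros Hb. apply @continuous_minus.
  - apply @continuous_scal_r, continuous_bernstein.
  - apply (continuous_comp (fun x => x + a') psi); [|apply psi_cont, Hb].
    apply (ex_derive_continuous (V := R_NormedModule)). auto_derive; auto.
Qed.

Lemma defect_m1 : defect (-1) = zero.
Proof.
  unfold defect. rewrite SN_bernstein, bernstein_m1, hN_last by (unfold N; lia).
  rewrite Rplus_comm. apply minus_eq_zero.
Qed.

Lemma SN_primitive_error a e Mp :
  inI lo hi (a + a') ->
  (forall b s, Rmin (-1) a <= b <= Rmax (-1) a -> 0 <= s <= hN_step eps N ->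
     Cmod (Cminus (SN (eps_shift eps) psi M (b, a' + s)) (psi (b + a'))) <= e) ->
  (forall b, Rmin (-1) a <= b <= Rmax (-1) a -> Cmod (psi (b + a')) <= Mp) ->
  Cmod (Cminus (SN eps (primitive psi a0) N (a, a')) (primitive psi a0 (a + a')))
    <= Rabs (a + 1) * (e + eps N * Mp).
Proof.
  intros Ha HSN Hpsi.
  assert (Hseg : forall b, Rmin (-1) a <= b <= Rmax (-1) a -> inI lo hi (b + a')).
  { intros b Hb. apply (inI_between lo hi (a' + -1) (a + a')); [apply nodes_in; lra | exact Ha |].
    unfold Rmin, Rmax in *. do 2 destruct Rle_dec; lra. }
  assert (HFTC : is_RInt defect' (-1) a (minus (defect a) (defect (-1)))).
  { apply (@is_RInt_derive C_R_CompleteNormedModule); intros x Hx;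
      [apply is_derive_defect | apply continuous_defect']; apply Hseg, Hx. }
  rewrite defect_m1, minus_zero_r in HFTC.
  assert (HN : 0 < INR N) by (apply lt_0_INR; unfold N; lia).
  assert (Hk : INR N / 2 * hN_step eps N = 1 - eps N) by (unfold hN_step; field; lra).
  assert (Hstep : 0 <= hN_step eps N) by (apply hN_step_nonneg; lra).
  assert (HdF : forall b, Rmin (-1) a <= b <= Rmax (-1) a ->
    norm (defect' b) <= e + eps N * Mp).
  { intros b Hb. rewrite <- Cmod_norm.
    eapply Rle_trans; [apply (Cmod_scal_average (fun s => SN (eps_shift eps) psi M (b, a' + s))
      (bernstein M (fwd_diff g) b) (psi (b + a')) (INR N / 2) (hN_step eps N) e) |].
    - exact Hstep.
    - lra.
    - lra.
    - apply is_RInt_SN_eps_shift.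
    - intros s Hs. apply HSN; assumption.
    - rewrite Hk. replace (1 - (1 - eps N)) with (eps N) by ring.
      apply Rplus_le_compat_l, Rmult_le_compat_l; [lra | apply Hpsi, Hb]. }
  rewrite Cmod_norm. replace (a + 1) with (a - -1) by ring.
  exact (norm_RInt_le_const_abs defect' (-1) a _ _ HdF HFTC).
Qed.

End Primitive.

Notation R2 := (prod_UniformSpace R_UniformSpace R_UniformSpace).

Lemma compact2_ext (K K' : R * R -> Prop) :
  (forall q, K q <-> K' q) -> compact2 K -> compact2 K'.
Proof.
  intros HKK' HK I U HU Hcov. destruct (HK I U HU) as [l Hl].
  - intros q Hq. apply Hcov, HKK', Hq.
  - exists l. intros q Hq. apply Hl, HKK', Hq.
Qed.

Lemma compact2_directed (K : R * R -> Prop) (V : nat -> R * R -> Prop) :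
  compact2 K -> (forall n, @open R2 (V n)) ->
  (forall n n' p, (n <= n')%nat -> V n p -> V n' p) ->
  (forall p, K p -> exists n, V n p) ->
  exists n, forall p, K p -> V n p.
Proof.
  intros HK HV Hmon Hcov. destruct (HK nat V HV Hcov) as [l Hl].
  exists (fold_right max 0%nat l). intros p Hp.
  destruct (Hl p Hp) as [i [Hi HVi]]. apply (Hmon i); [|exact HVi].
  clear - Hi. induction l as [|j l IH]; simpl in *; [tauto|].
  destruct Hi as [->|Hi]; [lia | specialize (IH Hi); lia].
Qed.

Lemma compact2_diff_open (K G : R * R -> Prop) :
  compact2 K -> @open R2 G -> compact2 (fun q => K q /\ ~ G q).
Proof.
  intros HK HG I U HU Hcov.
  set (U' := fun (o : option I) q => match o with Some i => U i q | None => G q end).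
  destruct (HK _ U') as [l Hl].
  - intros [i|]; [apply HU | exact HG].
  - intros q Hq. destruct (classic (G q)) as [Hg|Hg]; [exists None; exact Hg|].
    destruct (Hcov q (conj Hq Hg)) as [i Hi]. exists (Some i). exact Hi.
  - exists (flat_map (fun o => match o with Some i => i :: nil | None => nil end) l).
    intros q [Hq Hg]. destruct (Hl q Hq) as [[i|] [Hin Hu]]; [|contradiction].
    exists i. split; [|exact Hu]. apply in_flat_map. exists (Some i). simpl; auto.
Qed.

Lemma finite_net (dd : R) (n : nat) (x0 x1 : R) : 0 < dd -> x0 <= x1 <= x0 + INR n * dd ->
  exists l, (forall g, In g l -> x0 <= g <= x1) /\
            (forall x, x0 <= x <= x1 -> exists g, In g l /\ Rabs (x - g) < dd).
Proof.
  intros Hdd. revert x1. induction n as [|n IH]; intros x1 Hx1.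
  - exists (x0 :: nil). simpl in Hx1. split.
    + intros g [<-|[]]. lra.
    + intros x Hx. exists x0. split; [left; reflexivity | rewrite Rabs_right; lra].
  - rewrite S_INR in Hx1. destruct (Rle_or_lt x1 (x0 + INR n * dd)) as [Hle|Hlt].
    + apply IH. lra.
    + assert (0 <= INR n * dd) by (apply Rmult_le_pos; [apply pos_INR | lra]).
      destruct (IH (x0 + INR n * dd)) as [l [Hl1 Hl2]]; [lra|].
      exists (x1 :: l). split.
      * intros g [<-|Hg]; [lra | specialize (Hl1 g Hg); lra].
      * intros x Hx. destruct (Rle_or_lt x (x0 + INR n * dd)) as [Hx'|Hx'].
        -- destruct (Hl2 x) as [g [Hg Hxg]]; [lra|]. exists g. split; [right|]; assumption.
        -- exists x1. split; [left; reflexivity | rewrite Rabs_left1; lra].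
Qed.

Definition square (r : R) (q : R * R) : Prop := -r <= fst q <= r /\ -r <= snd q <= r.

Lemma square_lebesgue_number (r : R) (I : Type) (U : I -> R * R -> Prop) :
  (forall i, @open R2 (U i)) -> (forall q, square r q -> exists i, U i q) ->
  exists dd : posreal, forall g, square r g -> exists i, forall y,
    Rabs (fst y - fst g) < dd -> Rabs (snd y - snd g) < dd -> U i y.
Proof.
  intros HU Hcov.
  assert (Hrad : forall u v : R, exists d : posreal, square r (u, v) ->
     exists i, forall y, @ball R2 (u, v) (2 * d) y -> U i y).
  { intros u v. destruct (classic (square r (u, v))) as [Hb|Hb].
    - destruct (Hcov _ Hb) as [i Hi]. destruct (HU i _ Hi) as [d Hd].
      exists (pos_div_2 d). intros _. exists i. intros y Hy. apply Hd.
      simpl in Hy. replace (2 * (d / 2)) with (pos d) in Hy by field. exact Hy.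
    - exists (mkposreal 1 Rlt_0_1). intros; contradiction. }
  destruct (choice (fun uv d =>
    square r uv -> exists i, forall y, @ball R2 uv (2 * pos d) y -> U i y)) as [delta Hdelta];
    [intros [u v]; apply Hrad|].
  destruct (compactness_value_2d (-r) r (-r) r (fun u v => delta (u, v))) as [dd Hdd].
  exists dd. intros [gx gy] [Hgx Hgy]. simpl in Hgx, Hgy.
  apply NNPP. intros Hno. apply (Hdd gx gy Hgx Hgy). intros (u & v & Hu & Hv & H1 & H2 & H3).
  apply Hno. destruct (Hdelta (u, v) (conj Hu Hv)) as [i Hi]. exists i. intros y Hy1 Hy2.
  assert (Htri : forall x g w, Rabs (x + - w) <= Rabs (x - g) + Rabs (g - w))
    by (intros x g w; replace (x + - w) with ((x - g) + (g - w)) by ring; apply Rabs_triang).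
  apply Hi. split; simpl in *.
  - eapply Rle_lt_trans; [apply (Htri _ gx) | lra].
  - eapply Rle_lt_trans; [apply (Htri _ gy) | lra].
Qed.

Lemma compact2_square (r : R) : compact2 (square r).
Proof.
  intros I U HU Hcov.
  destruct (Rlt_or_le r 0) as [Hr|Hr]; [exists nil; intros q [Hq _]; lra|].
  destruct (square_lebesgue_number r I U HU Hcov) as [dd Hdd].
  destruct (Hcov (0, 0)) as [i0 _]; [split; simpl; lra|].
  destruct (choice (fun (g : R * R) i => square r g -> forall y,
    Rabs (fst y - fst g) < dd -> Rabs (snd y - snd g) < dd -> U i y)) as [sel Hsel].
  { intros g. destruct (classic (square r g)) as [Hg|Hg]; [|exists i0; tauto].
    destruct (Hdd g Hg) as [i Hi]. exists i. auto. }
  destruct (INR_archimed dd (2 * r) (cond_pos dd)) as [n Hn].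
  destruct (finite_net dd n (-r) r) as [l [Hl1 Hl2]]; [apply cond_pos | lra |].
  exists (flat_map (fun gx => map (fun gy => sel (gx, gy)) l) l).
  intros q [Hqx Hqy].
  destruct (Hl2 _ Hqx) as [gx [Hgx Hx]]. destruct (Hl2 _ Hqy) as [gy [Hgy Hy]].
  exists (sel (gx, gy)). split.
  - apply in_flat_map. exists gx. split; [exact Hgx|].
    apply (in_map (fun gy => sel (gx, gy))), Hgy.
  - apply Hsel; [split; simpl; auto | exact Hx | exact Hy].
Qed.

Lemma continuous_affine2 (al be ga : R) (q : R * R) :
  @continuous R2 R_UniformSpace (fun q : R * R => al * fst q + be * snd q + ga) q.
Proof.
  destruct q as [x y].
  apply (@continuous_plus _ R_AbsRing R_NormedModule); [|apply continuous_const].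
  apply (@continuous_plus _ R_AbsRing R_NormedModule).
  - apply (@continuous_scal_r _ R_AbsRing R_NormedModule al fst), continuous_fst.
  - apply (@continuous_scal_r _ R_AbsRing R_NormedModule be snd), continuous_snd.
Qed.

Lemma open_affine_preimage (D : R -> Prop) (f : R * R -> R) (al be ga : R) :
  (forall q, f q = al * fst q + be * snd q + ga) -> open D -> @open R2 (fun q => D (f q)).
Proof.
  intros Hf HD. apply (open_comp f D); [|exact HD].
  intros q _. eapply filterlim_ext; [intros x; symmetry; apply Hf|].
  rewrite (Hf q). apply continuous_affine2.
Qed.

Definition window (lo' hi' r : R) (q : R * R) : Prop :=
  -r <= fst q <= r /\ lo' <= snd q - 1 /\ snd q + 1 <= hi' /\ lo' <= fst q + snd q <= hi'.

Lemma compact2_window lo' hi' r : compact2 (window lo' hi' r).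
Proof.
  set (G := fun q : R * R => fst q < -r \/ r < fst q \/ snd q - 1 < lo' \/ hi' < snd q + 1 \/
                             fst q + snd q < lo' \/ hi' < fst q + snd q).
  apply (compact2_ext (fun q => square (r + Rabs lo' + Rabs hi' + 1) q /\ ~ G q)).
  - intros q. unfold square, window, G.
    pose proof (Rle_abs lo'). pose proof (Rle_abs hi').
    pose proof (Rle_abs (- lo')). pose proof (Rle_abs (- hi')). rewrite !Rabs_Ropp in *.
    split; [intros [_ Hq]; lra | intros Hq; lra].
  - apply compact2_diff_open; [apply compact2_square|].
    repeat apply open_or.
    + apply (open_affine_preimage (fun x => x < -r) fst 1 0 0); [intros; ring | apply open_lt].
    + apply (open_affine_preimage (fun x => r < x) fst 1 0 0); [intros; ring | apply open_gt].
    + apply (open_affine_preimage (fun x => x < lo') (fun q => snd q - 1) 0 1 (-1));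
        [intros; ring | apply open_lt].
    + apply (open_affine_preimage (fun x => hi' < x) (fun q => snd q + 1) 0 1 1);
        [intros; ring | apply open_gt].
    + apply (open_affine_preimage (fun x => x < lo') (fun q => fst q + snd q) 1 1 0);
        [intros; ring | apply open_lt].
    + apply (open_affine_preimage (fun x => hi' < x) (fun q => fst q + snd q) 1 1 0);
        [intros; ring | apply open_gt].
Qed.

Lemma window_bbA lo hi lo' hi' r q :
  (forall x, lo' <= x <= hi' -> inI lo hi x) -> window lo' hi' r q -> bbA lo hi q.
Proof.
  intros Hin (_ & H1 & H2 & H3). split; [intros t Ht|]; apply Hin; lra.
Qed.

Lemma inI_locally lo hi x :
  inI lo hi x -> exists r, 0 < r /\ forall y, Rabs (y - x) < r -> inI lo hi y.
Proof.
  intros Hx. destruct (inI_open lo hi x Hx) as [r Hr].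
  exists r. split; [apply cond_pos|]. intros y Hy. apply Hr. exact Hy.
Qed.

Definition margin_region (lo hi : Rbar) (n : nat) (p : R * R) : Prop :=
  inI (- INR n) (INR n) (fst p) /\ inI (- INR n) (INR n) (snd p) /\
  inI lo hi (snd p - 1 - / (INR n + 1)) /\ inI lo hi (snd p + 1 + / (INR n + 1)) /\
  inI lo hi (fst p + snd p - / (INR n + 1)) /\ inI lo hi (fst p + snd p + / (INR n + 1)).

Lemma open_margin_region lo hi n : @open R2 (margin_region lo hi n).
Proof.
  set (m := / (INR n + 1)).
  apply open_and; [|apply open_and; [|apply open_and; [|apply open_and; [|apply open_and]]]].
  - apply (open_affine_preimage (inI _ _) fst 1 0 0); [intros; ring | apply inI_open].
  - apply (open_affine_preimage (inI _ _) snd 0 1 0); [intros; ring | apply inI_open].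
  - apply (open_affine_preimage (inI lo hi) (fun q => snd q - 1 - m) 0 1 (-1 - m));
      [intros; ring | apply inI_open].
  - apply (open_affine_preimage (inI lo hi) (fun q => snd q + 1 + m) 0 1 (1 + m));
      [intros; ring | apply inI_open].
  - apply (open_affine_preimage (inI lo hi) (fun q => fst q + snd q - m) 1 1 (- m));
      [intros; ring | apply inI_open].
  - apply (open_affine_preimage (inI lo hi) (fun q => fst q + snd q + m) 1 1 m);
      [intros; ring | apply inI_open].
Qed.

Lemma margin_region_mono lo hi n n' p :
  (n <= n')%nat -> margin_region lo hi n p -> margin_region lo hi n' p.
Proof.
  intros Hnn' ([H1 H1'] & [H2 H2'] & H3 & H4 & H5 & H6). simpl in H1, H1', H2, H2'.
  assert (INR n <= INR n') by (apply le_INR; exact Hnn').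
  assert (0 <= INR n) by apply pos_INR.
  assert (/ (INR n' + 1) <= / (INR n + 1)) by (apply Rinv_le_contravar; lra).
  assert (0 < / (INR n' + 1)) by (apply Rinv_0_lt_compat; lra).
  assert (Hseg : forall x y z, inI lo hi x -> inI lo hi y -> x <= z <= y -> inI lo hi z)
    by (intros x y z Hx Hy Hz; apply (inI_between lo hi x y); [assumption | assumption |];
        rewrite Rmin_left, Rmax_right; lra).
  refine (conj _ (conj _ (conj _ (conj _ (conj _ _))))); try (split; simpl; lra).
  - apply (Hseg _ _ _ H3 H4); lra.
  - apply (Hseg _ _ _ H3 H4); lra.
  - apply (Hseg _ _ _ H5 H6); lra.
  - apply (Hseg _ _ _ H5 H6); lra.
Qed.

Lemma bbA_margin_region lo hi p : bbA lo hi p -> exists n, margin_region lo hi n p.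
Proof.
  intros [Ht Hs].
  destruct (inI_locally _ _ _ (Ht (-1) ltac:(lra))) as [r1 [Hr1 H1]].
  destruct (inI_locally _ _ _ (Ht 1 ltac:(lra))) as [r2 [Hr2 H2]].
  destruct (inI_locally _ _ _ Hs) as [r3 [Hr3 H3]].
  set (r := Rmin r1 (Rmin r2 r3)).
  assert (Hr : 0 < r /\ r <= r1 /\ r <= r2 /\ r <= r3)
    by (unfold r, Rmin; repeat destruct Rle_dec; lra).
  destruct (INR_unbounded (Rmax (Rabs (fst p)) (Rmax (Rabs (snd p)) (/ r)))) as [n Hn].
  exists n.
  pose proof (Rmax_l (Rabs (fst p)) (Rmax (Rabs (snd p)) (/ r))).
  pose proof (Rmax_r (Rabs (fst p)) (Rmax (Rabs (snd p)) (/ r))).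
  pose proof (Rmax_l (Rabs (snd p)) (/ r)). pose proof (Rmax_r (Rabs (snd p)) (/ r)).
  assert (0 <= INR n) by apply pos_INR.
  assert (Hm0 : 0 < / (INR n + 1)) by (apply Rinv_0_lt_compat; lra).
  assert (Hmr : / (INR n + 1) < r).
  { rewrite <- (Rinv_inv r). apply Rinv_lt_contravar; [|lra].
    apply Rmult_lt_0_compat; [apply Rinv_0_lt_compat|]; lra. }
  assert (Habs : forall x, Rabs x < INR n -> inI (- INR n) (INR n) x)
    by (intros x Hx; apply Rabs_def2 in Hx; split; simpl; lra).
  refine (conj _ (conj _ (conj _ (conj _ (conj _ _))))); try (apply Habs; lra).
  - apply H1. rewrite Rabs_left1; lra.
  - apply H2. rewrite Rabs_right; lra.
  - apply H3. rewrite Rabs_left1; lra.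
  - apply H3. rewrite Rabs_right; lra.
Qed.

Lemma Rbar_lt_lower_margin (lo : Rbar) (m B : R) : 0 < m -> (exists x : R, Rbar_lt lo x) ->
  exists lo', (forall x, lo' <= x -> Rbar_lt lo x) /\
              (forall y, Rbar_lt lo (y - m) -> - B < y -> lo' <= y).
Proof.
  intros Hm [x0 Hx0]. destruct lo as [l| |]; simpl in Hx0 |- *; [|contradiction|].
  - exists (l + m). split; intros; lra.
  - exists (- B). split; [auto | intros; lra].
Qed.

Lemma Rbar_lt_upper_margin (hi : Rbar) (m B : R) : 0 < m -> (exists x : R, Rbar_lt x hi) ->
  exists hi', (forall x, x <= hi' -> Rbar_lt x hi) /\
              (forall y, Rbar_lt (y + m) hi -> y < B -> y + m / 2 <= hi').
Proof.
  intros Hm [x0 Hx0]. destruct hi as [h| |]; simpl in Hx0 |- *; [| |contradiction].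
  - exists (h - m / 2). split; intros; lra.
  - exists (B + m / 2). split; [auto | intros; lra].
Qed.

Definition inner_window (lo' hi' r m : R) (p : R * R) : Prop :=
  Rabs (fst p) <= r /\ lo' <= snd p - 1 /\ snd p + 1 + m <= hi' /\
  lo' <= fst p + snd p /\ fst p + snd p + m <= hi'.

Lemma compact_inner_window lo hi K :
  compact2 K -> (forall p, K p -> bbA lo hi p) -> (exists p, K p) ->
  exists lo' hi' r m, 0 < m /\ (forall x, lo' <= x <= hi' -> inI lo hi x) /\
    forall p, K p -> inner_window lo' hi' r m p.
Proof.
  intros HK HKA [p0 Hp0].
  destruct (compact2_directed K (margin_region lo hi) HK (open_margin_region lo hi)
    (margin_region_mono lo hi) (fun p Hp => bbA_margin_region lo hi p (HKA p Hp))) as [n Hn].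
  set (m := / (INR n + 1)) in Hn.
  assert (0 <= INR n) by apply pos_INR.
  assert (Hm : 0 < m) by (apply Rinv_0_lt_compat; lra).
  destruct (Hn p0 Hp0) as (_ & _ & [Hlo0 _] & [_ Hhi0] & _).
  destruct (Rbar_lt_lower_margin lo m (2 * INR n + 1) Hm
    (ex_intro (fun x : R => Rbar_lt lo x) _ Hlo0)) as [lo' [Hlo1 Hlo2]].
  destruct (Rbar_lt_upper_margin hi m (2 * INR n + 1) Hm
    (ex_intro (fun x : R => Rbar_lt x hi) _ Hhi0)) as [hi' [Hhi1 Hhi2]].
  exists lo', hi', (INR n), (m / 2). split; [lra|]. split.
  - intros x Hx. split; [apply Hlo1 | apply Hhi1]; lra.
  - intros p Hp.
    destruct (Hn p Hp) as ([Hf1 Hf2] & [Hs1 Hs2] & [H3 _] & [_ H4] & [H5 _] & [_ H6]).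
    simpl in Hf1, Hf2, Hs1, Hs2.
    split; [apply Rabs_le; lra|].
    split; [apply (Hlo2 _ H3); lra|]. split; [apply (Hhi2 _ H4); lra|].
    split; [apply (Hlo2 _ H5); lra | apply (Hhi2 _ H6); lra].
Qed.

Lemma eventually_hN_step_lt eta : 0 < eta ->
  exists N0, forall N eps, (N0 <= N)%nat -> 0 <= eps N <= 1 -> hN_step eps N < eta.
Proof.
  intros Heta. destruct (INR_archimed eta 2 Heta) as [N0 HN0]. exists N0. intros N eps HN He.
  assert (INR N0 <= INR N) by (apply le_INR; exact HN).
  assert (HNpos : 0 < INR N) by nra.
  unfold hN_step. apply (Rmult_lt_reg_r (INR N)); [exact HNpos|].
  unfold Rdiv. rewrite Rmult_assoc, Rinv_l by lra. nra.
Qed.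

Lemma Cmod_minus_triangle (u v w : C) :
  Cmod (Cminus u w) <= Cmod (Cminus u v) + Cmod (Cminus v w).
Proof.
  replace (Cminus u w) with (Cplus (Cminus u v) (Cminus v w)) by C_field.
  apply Cmod_triangle.
Qed.

Definition unif_supershift (lo hi : Rbar) (f : R -> C) : Prop :=
  forall (I' : Type) (eps : I' -> nat -> R),
    (forall i, adm_seq (eps i)) -> unif_vanishing eps ->
    forall K, (forall p, K p -> bbA lo hi p) -> compact2 K ->
    forall e, 0 < e -> exists N0 : nat, forall N, (N0 <= N)%nat ->
      forall i p, K p -> Cmod (Cminus (SN (eps i) f N p) (f (fst p + snd p))) < e.

Lemma SN_primitive_error_inner_window lo hi psi a0 lo' hi' r m d e Mp M eps p :
  (forall x, inI lo hi x -> @continuous R_UniformSpace C_R_NormedModule psi x) -> inI lo hi a0 ->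
  (1 <= M)%nat -> 0 <= eps (S M) < 1 -> bbA lo hi p -> inner_window lo' hi' r m p ->
  hN_step eps (S M) < Rmin d m ->
  (forall x, lo' <= x <= hi' -> Cmod (psi x) <= Mp) ->
  (forall x y, lo' <= x <= hi' -> lo' <= y <= hi' -> Rabs (y - x) < d ->
     Cmod (Cminus (psi y) (psi x)) <= e) ->
  (forall q, window lo' hi' (r + 1) q ->
     Cmod (Cminus (SN (eps_shift eps) psi M q) (psi (fst q + snd q))) <= e) ->
  Cmod (Cminus (SN eps (primitive psi a0) (S M) p) (primitive psi a0 (fst p + snd p)))
    <= (r + 1) * (2 * e + eps (S M) * Mp).
Proof.
  intros Hc Ha0 HM HeN [Hnodes Hsum] (Ha & Hlo1 & Hhi1 & Hlo2 & Hhi2) Hstep HMp Hd HSN.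
  destruct p as [a a']. simpl in *. apply Rabs_le_between in Ha.
  assert (0 <= hN_step eps (S M)) by (apply hN_step_nonneg; lra).
  pose proof (Rmin_l d m). pose proof (Rmin_r d m).
  assert (He : 0 <= e).
  { eapply Rle_trans; [apply Cmod_ge_0 | apply (Hd (a + a') (a + a')); try lra].
    rewrite Rminus_diag, Rabs_R0. lra. }
  assert (0 <= Mp) by (eapply Rle_trans; [apply Cmod_ge_0 | apply (HMp (a + a')); lra]).
  assert (Hseg : forall b, Rmin (-1) a <= b <= Rmax (-1) a ->
    - (r + 1) <= b <= r + 1 /\ lo' <= b + a' /\ b + a' + m <= hi')
    by (intros b Hb; unfold Rmin, Rmax in Hb; destruct Rle_dec; lra).
  eapply Rle_trans.
  { apply (SN_primitive_error lo hi psi a0 Hc Ha0 M eps a' HM HeN Hnodes a (2 * e) Mp Hsum).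
    - intros b s Hb Hs. destruct (Hseg b Hb) as (Hb1 & Hb2 & Hb3).
      eapply Rle_trans; [apply (Cmod_minus_triangle _ (psi (b + (a' + s))))|].
      assert (Cmod (Cminus (SN (eps_shift eps) psi M (b, a' + s)) (psi (b + (a' + s)))) <= e)
        by (apply (HSN (b, a' + s)); unfold window; simpl; lra).
      assert (Cmod (Cminus (psi (b + (a' + s))) (psi (b + a'))) <= e)
        by (apply Hd; [lra | lra | rewrite Rabs_right; lra]).
      lra.
    - intros b Hb. destruct (Hseg b Hb) as (_ & Hb2 & Hb3). apply HMp. lra. }
  apply Rmult_le_compat_r; [apply Rplus_le_le_0_compat, Rmult_le_pos; lra|].
  apply Rabs_le. lra.
Qed.

Lemma unif_supershift_primitive lo hi psi a0 :
  (forall x, inI lo hi x -> @continuous R_UniformSpace C_R_NormedModule psi x) -> inI lo hi a0 ->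
  unif_supershift lo hi psi -> unif_supershift lo hi (primitive psi a0).
Proof.
  intros Hc Ha0 Hpsi I' eps Hadm Hu K HKA HK e He.
  destruct (classic (exists p, K p)) as [HKne|HKe];
    [| exists 0%nat; intros N _ i p Hp; exfalso; eauto].
  destruct (compact_inner_window lo hi K HK HKA HKne) as (lo' & hi' & r & m & Hm & Hwin & HKwin).
  assert (Hr : 0 <= r)
    by (destruct HKne as [p Hp]; eapply Rle_trans; [apply Rabs_pos | apply (HKwin p Hp)]).
  assert (Hcw : forall x, lo' <= x <= hi' -> @continuous R_UniformSpace C_R_NormedModule psi x)
    by (intros x Hx; apply Hc, Hwin, Hx).
  destruct (bounded_continuity psi lo' hi' Hcw) as [Mp0 HMp0].
  set (Mp := Rabs Mp0 + 1).
  assert (HMp : forall x, lo' <= x <= hi' -> Cmod (psi x) <= Mp).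
  { intros x Hx. rewrite Cmod_norm. apply Rlt_le. eapply Rlt_le_trans; [apply HMp0, Hx|].
    pose proof (Rle_abs Mp0). unfold Mp. lra. }
  assert (0 < Mp) by (pose proof (Rabs_pos Mp0); unfold Mp; lra).
  set (e' := e / (3 * (r + 2))).
  assert (He' : 0 < e') by (unfold e'; apply Rdiv_lt_0_compat; lra).
  destruct (unifcont_normed_1d psi lo' hi' Hcw (mkposreal e' He')) as [d Hd].
  assert (Hrange : forall i N, 0 <= eps i (S N) <= 1)
    by (intros i N; destruct (Hadm i) as [Hr0 _]; specialize (Hr0 (S N) ltac:(lia)); lra).
  destruct (Hpsi I' (fun i => eps_shift (eps i)) (fun i => adm_seq_eps_shift _ (Hadm i))
    (unif_vanishing_eps_shift eps Hrange Hu) (window lo' hi' (r + 1))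
    (fun q => window_bbA lo hi lo' hi' (r + 1) q Hwin) (compact2_window lo' hi' (r + 1)) e' He')
    as [N1 HN1].
  destruct (Hu (e' / Mp)) as [N2 HN2]; [apply Rdiv_lt_0_compat; lra|].
  destruct (eventually_hN_step_lt (Rmin d m)) as [N3 HN3];
    [apply Rmin_glb_lt; [apply cond_pos | exact Hm]|].
  exists (S (max N1 (max N2 (max N3 1)))). intros N HN i p Hp.
  destruct N as [|M]; [lia|].
  assert (HeN : 0 <= eps i (S M) < 1) by (apply (Hadm i); lia).
  assert (HeMp : eps i (S M) * Mp <= e') by (apply Rle_div_r; [lra | apply HN2; lia]).
  eapply Rle_lt_trans.
  { apply (SN_primitive_error_inner_window lo hi psi a0 lo' hi' r m d e' Mp M (eps i) p);
      auto; try lia.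
    - apply HN3; [lia | specialize (Hrange i M); lra].
    - intros x y Hx Hy Hxy. rewrite Cmod_norm. apply Rlt_le, (Hd x y Hx Hy Hxy).
    - intros q Hq. apply Rlt_le, (HN1 M ltac:(lia) i q Hq). }
  apply Rle_lt_trans with ((r + 1) * (3 * e')); [apply Rmult_le_compat_l; lra|].
  unfold e'. apply (Rmult_lt_reg_r (r + 2)); [lra|]. field_simplify; lra.
Qed.

Theorem mainTheorem8 (lo hi : Rbar) (psi : R -> C) (a0 : R) :
  long_interval lo hi ->
  regular_supershift lo hi psi ->
  inI lo hi a0 ->
  regular_supershift lo hi
    (fun a => @RInt C_R_CompleteNormedModule psi a0 a).
Proof.
  intros _ [Hc [_ Hunif]] Ha0.
  assert (HPsi : unif_supershift lo hi (primitive psi a0))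
    by exact (unif_supershift_primitive lo hi psi a0 Hc Ha0 Hunif).
  split; [|split].
  - intros x Hx. apply (ex_derive_continuous (V := C_R_NormedModule)).
    exists (psi x). exact (is_derive_primitive lo hi psi a0 Hc Ha0 x Hx).
  - intros eps Hadm K HKA HK e He.
    destruct (HPsi unit (fun _ => eps) (fun _ => Hadm) (unif_vanishing_adm_seq eps Hadm)
      K HKA HK e He) as [N0 HN0].
    exists N0. intros N HN p Hp. exact (HN0 N HN tt p Hp).
  - exact HPsi.
Qed.
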